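(* Let $G$ be a connected graph with $n\geq 2$ vertices and $m$ edges, and let $S(G)$ be its subdivision. Then $$R^*(S(G))=8R^*(G)+2m(2m-2n+1).$$
   Context: All graphs are finite, undirected, without loops or multiple edges. For a connected graph $H$ and vertices $i,j$, the resistance distance $\Omega_{ij}$ is the effective resistance between $i$ and $j$ in the electrical network obtained from $H$ by replacing each edge by a unit resistor. With $d_i$ the degree of vertex $i$ in $H$ and the sum over unordered pairs of distinct vertices of $H$, the multiplicative degree-Kirchhoff index is $R^*(H)=\sum_{\{i,j\}\subseteq V(H)}d_id_j\Omega_{ij}$ (degrees and resistances taken in $H$). The subdivision $S(G)$ is the graph obtained from $G$ by replacing every edge with a path of length two (i.e., inserting one new vertex of degree 2 on each edge). *)

From HB Require Import structures.
From mathcomp Require Import all_boot all_order all_algebra.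
Set Implicit Arguments. Unset Strict Implicit. Unset Printing Implicit Defensive.
Import Order.TTheory GRing.Theory Num.Theory.
Local Open Scope ring_scope.

(* A finite simple graph on the vertex type V is given by its edge set
   E : {set {set V}}, every edge being a 2-element set of vertices. *)
Section Graphs.
Variable V : finType.
Implicit Types (E : {set {set V}}).

Definition simple_graph E : Prop := forall e, e \in E -> #|e| = 2%N.

Definition adj E : rel V := fun u v => (u != v) && ([set u; v] \in E).

Definition deg E (v : V) : nat := #|[set u | adj E v u]|.

Definition connected_graph E : Prop := forall u v : V, connect (adj E) u v.

Definition laplacian (R : fieldType) E : 'M[R]_#|V| :=
  \matrix_(i, j) (if i == j then (deg E (enum_val i))%:R
                  else if adj E (enum_val i) (enum_val j) then -1 else 0).

(* Resistance distance: inject a unit current at i and extract it at j;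
   phi is a potential satisfying Kirchhoff's and Ohm's laws
   (phi *m L = e_i - e_j, L symmetric), and Omega_ij = phi_i - phi_j. *)
Definition resistance (R : fieldType) E (i j : V) : R :=
  let u : 'rV[R]_#|V| := delta_mx 0 (enum_rank i) - delta_mx 0 (enum_rank j) in
  let phi := u *m pinvmx (laplacian R E) in
  phi 0 (enum_rank i) - phi 0 (enum_rank j).

(* multiplicative degree-Kirchhoff index: sum over unordered pairs {i,j}, i != j *)
Definition mult_deg_kirchhoff (R : fieldType) E : R :=
  \sum_(i : V) \sum_(j : V | (enum_rank i < enum_rank j)%N)
     (deg E i)%:R * (deg E j)%:R * resistance R E i j.

End Graphs.

(* Subdivision S(G): vertices are the old vertices plus one new vertex per edge;
   the new vertex of edge e is joined to the two endpoints of e. *)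
Section Subdivision.
Variable V : finType.
Variable E : {set {set V}}.

Definition sub_vertex : finType := (V + {x : {set V} | x \in E})%type.

Definition sub_edges : {set {set sub_vertex}} :=
  [set s : {set sub_vertex} |
     [exists v : V, exists e : {x : {set V} | x \in E},
        (v \in val e) && (s == [set (inl v : sub_vertex); inr e])]].

End Subdivision.

(* Resistances can be read off any degree-weighted Green family
   (L y_k = delta_k - d / vol): Omega_ij = y_i(i) - y_i(j) + y_j(j) - y_j(i),
   so that R* = sum_k d_k (vol * y_k(k) - <y_k, d>).  Subdividing doubles every
   resistance, so a Green family of S(G) is obtained explicitly from one of G by
   doubling it on the old vertices and interpolating linearly at the midpoints.
   Substituting it, and using vol S(G) = 2 vol G = 4m, gives the formula. *)

From HB Require Import structures.
From mathcomp Require Import all_boot all_order all_algebra.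
From mathcomp Require Import ring lra.
Set Implicit Arguments. Unset Strict Implicit. Unset Printing Implicit Defensive.
Import Order.TTheory GRing.Theory Num.Theory.
Local Open Scope ring_scope.

Section Laplacian.
Variable R : realFieldType.
Variable W : finType.
Variable F : {set {set W}}.
Implicit Types (f g : W -> R) (u v w : W).

Lemma adjC u v : adj F u v = adj F v u.
Proof. by rewrite /adj eq_sym setUC. Qed.

Lemma adj_irr u : adj F u u = false.
Proof. by rewrite /adj eqxx. Qed.

Lemma degE w : (deg F w)%:R = \sum_(u | adj F w u) (1 : R).
Proof. by rewrite /deg cardsE -sum1_card natr_sum. Qed.

Definition vol : R := \sum_w (deg F w)%:R.

Definition delta (i w : W) : R := (w == i)%:R.

Lemma sum_delta i : \sum_w delta i w = 1.
Proof.
by rewrite (bigD1 i) //= /delta eqxx big1 ?addr0 // => w /negbTE->.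
Qed.

Lemma sum_delta_mul i f : \sum_w delta i w * f w = f i.
Proof.
by rewrite (bigD1 i) //= /delta eqxx mul1r big1 ?addr0 // => w /negbTE->; rewrite mul0r.
Qed.

Lemma sum_delta_in (A : {set W}) w : \sum_(i in A) delta i w = (w \in A)%:R.
Proof.
case: (boolP (w \in A)) => wA.
  rewrite (bigD1 w) //= /delta eqxx big1 ?addr0 // => i /andP[_ ne].
  by rewrite eq_sym (negbTE ne).
by rewrite big1 // => i iA; rewrite /delta; case: eqP => // eq_wi; rewrite eq_wi iA in wA.
Qed.

Definition lap f w : R := (deg F w)%:R * f w - \sum_(u | adj F w u) f u.

Lemma lapD f g w : lap (fun x => f x + g x) w = lap f w + lap g w.
Proof. by rewrite /lap big_split /= mulrDr opprD addrACA. Qed.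

Lemma lapB f g w : lap (fun x => f x - g x) w = lap f w - lap g w.
Proof. by rewrite /lap sumrB mulrBr; ring. Qed.

Lemma lapZ (c : R) f w : lap (fun x => c * f x) w = c * lap f w.
Proof. by rewrite /lap -mulr_sumr mulrBr mulrCA. Qed.

Lemma lap_sum (I : finType) (P : pred I) (f : I -> W -> R) w :
  lap (fun x => \sum_(i | P i) f i x) w = \sum_(i | P i) lap (f i) w.
Proof.
rewrite /lap mulr_sumr (exchange_big_dep P) //= -sumrB.
by apply: eq_bigr => i Pi; congr (_ - _); apply: eq_bigl => u; rewrite Pi andbT.
Qed.

Lemma sum_lap f : \sum_w lap f w = 0.
Proof.
rewrite /lap sumrB (exchange_big_dep xpredT) //=.
have -> : \sum_u \sum_(w | adj F w u) f u = \sum_u (deg F u)%:R * f u.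
  apply: eq_bigr => u _; rewrite degE mulr_suml.
  by apply: eq_big => [w|w _]; [exact: adjC | rewrite mul1r].
exact: subrr.
Qed.

(* Maximum principle: along an edge out of a maximum of f the value cannot drop. *)
Lemma harmonic_const f : connected_graph F -> (forall w, lap f w = 0) ->
  forall u v, f u = f v.
Proof.
move=> connF harm u v.
have [w0 _ maxf] := @Order.TotalTheory.arg_maxP _ _ _ u predT f isT.
have adj_max x y : adj F x y -> f x = f w0 -> f y = f w0.
  move=> xy fx; move: (harm x); rewrite /lap degE mulr_suml fx.
  move/eqP; rewrite subr_eq0 -subr_eq0 -sumrB => /eqP/psumr_eq0P eq0.
  apply/eqP; rewrite eq_sym -subr_eq0; apply/eqP; rewrite -[f w0]mul1r.
  by apply: eq0 => // i _; rewrite mul1r subr_ge0; apply: maxf.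
have max_closed : closed (adj F) [pred x | f x == f w0].
  by move=> x y xy /=; apply/eqP/eqP; apply: adj_max; rewrite // adjC.
have fE z : f z = f w0.
  by have := closed_connect max_closed (connF w0 z); rewrite !inE eqxx => /esym/eqP.
by rewrite !fE.
Qed.

Definition rowfun f : 'rV[R]_#|W| := \row_i f (enum_val i).

Lemma rowfunE f w : rowfun f 0 (enum_rank w) = f w.
Proof. by rewrite mxE enum_rankK. Qed.

Lemma rowfun_entries (v : 'rV[R]_#|W|) : rowfun (fun w => v 0 (enum_rank w)) = v.
Proof. by apply/rowP => k; rewrite mxE enum_valK. Qed.

Lemma rowfun_laplacian f : rowfun f *m laplacian R F = rowfun (lap f).
Proof.
apply/rowP => j; rewrite -[j]enum_valK; move: (enum_val j) => x {j}.
rewrite !mxE enum_rankK.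
under eq_bigr => i _ do rewrite mxE -[in laplacian _ _ i _](enum_valK i).
rewrite -(big_enum_val (A := predT)
  (fun w => f w * laplacian R F (enum_rank w) (enum_rank x))) /=.
rewrite (bigD1 x) //= mxE !enum_rankK eqxx /lap mulrC; congr (_ + _).
rewrite (bigID (adj F x)) /= addrC big1 => [|i /andP[ix not_xi]]; last first.
  by rewrite mxE !enum_rankK (inj_eq enum_rank_inj) (negbTE ix) adjC (negbTE not_xi) mulr0.
rewrite add0r -sumrN; apply: eq_big => [i|i /andP[ix xi]].
  by case: (eqVneq i x) => [->|]; rewrite ?adj_irr ?andbT.
by rewrite mxE !enum_rankK (inj_eq enum_rank_inj) (negbTE ix) adjC xi mulrN1.
Qed.

(* The potential of the unit current from i to j is unique up to a constant. *)
Lemma resistanceE f i j : connected_graph F ->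
  (forall w, lap f w = delta i w - delta j w) ->
  resistance R F i j = f i - f j.
Proof.
move=> connF lapf.
set u : 'rV[R]_#|W| := delta_mx 0 (enum_rank i) - delta_mx 0 (enum_rank j).
have uE : u = rowfun f *m laplacian R F.
  rewrite rowfun_laplacian; apply/rowP => k; rewrite -[k]enum_valK.
  by rewrite rowfunE lapf !mxE /delta !(inj_eq enum_rank_inj).
pose g w := (u *m pinvmx (laplacian R F)) 0 (enum_rank w).
have lapg w : lap g w = lap f w.
  rewrite -[LHS]rowfunE -[RHS]rowfunE -!rowfun_laplacian rowfun_entries uE.
  by rewrite mulmxKpV //; apply/submxP; exists (rowfun f).
have harm w : lap (fun x => g x - f x) w = 0 by rewrite lapB lapg subrr.
have := harmonic_const connF harm i j.
by rewrite /resistance -/u -/(g i) -/(g j); lra.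
Qed.

Lemma rowfun_laplacianJ f :
  rowfun f *m (laplacian R F + const_mx 1) = rowfun (fun w => lap f w + \sum_u f u).
Proof.
rewrite mulmxDr rowfun_laplacian; apply/rowP => k; rewrite !mxE; congr (_ + _).
rewrite (big_enum_val (A := predT) f) /=.
by apply: eq_bigr => l _; rewrite !mxE mulr1.
Qed.

Lemma lapJ_solution f t : (0 < #|W|)%N -> \sum_w t w = 0 ->
  (forall w, lap f w + \sum_u f u = t w) ->
  \sum_u f u = 0 /\ forall w, lap f w = t w.
Proof.
move=> W0 sum_t lapJf.
have sum_f : \sum_u f u = 0.
  move: sum_t; under eq_bigr do rewrite -lapJf.
  rewrite big_split /= sum_lap add0r sumr_const -mulr_natr => /eqP.
  by rewrite mulf_eq0 pnatr_eq0 eqn0Ngt W0 orbF => /eqP.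
by split => // w; rewrite -lapJf sum_f addr0.
Qed.

(* Adding the all-ones matrix J kills the one-dimensional kernel of L. *)
Lemma laplacianJ_unit : connected_graph F -> (0 < #|W|)%N ->
  laplacian R F + const_mx 1 \in unitmx.
Proof.
move=> connF W0; rewrite -row_free_unit -kermx_eq0; apply/eqP/row_matrixP => k.
rewrite row0; set v := row k _; pose f w := v 0 (enum_rank w).
have lapJf w : lap f w + \sum_u f u = 0.
  rewrite -(rowfunE (fun w => lap f w + _)) -rowfun_laplacianJ rowfun_entries.
  by rewrite (sub_kermxP (row_sub _ _)) mxE.
have [sum_f lapf] := lapJ_solution (t := fun=> 0) W0 (big1_eq _ _) lapJf.
have [w0 _] := card_gt0P W0.
have fE := harmonic_const connF lapf.
have f0 : f w0 = 0.
  move: sum_f; under eq_bigr do rewrite (fE _ w0).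
  by rewrite sumr_const -mulr_natl => /eqP; rewrite mulf_eq0 pnatr_eq0 eqn0Ngt W0 => /eqP.
by apply/rowP => l; rewrite -[l]enum_valK [RHS]mxE -f0; apply: fE.
Qed.

Definition lap_solve (t : W -> R) : W -> R :=
  fun w => (rowfun t *m invmx (laplacian R F + const_mx 1)) 0 (enum_rank w).

Lemma lap_solveK t : connected_graph F -> (0 < #|W|)%N -> \sum_w t w = 0 ->
  forall w, lap (lap_solve t) w = t w.
Proof.
move=> connF W0 sum_t; apply: (proj2 (lapJ_solution W0 sum_t _)) => w.
rewrite -(rowfunE (fun w => lap _ w + _)) -rowfun_laplacianJ rowfun_entries.
rewrite mulmxKV ?rowfunE //.
exact: laplacianJ_unit.
Qed.

Lemma sum_rank_lt (g : W -> W -> R) :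
  (forall i j, g i j = g j i) -> (forall i, g i i = 0) ->
  \sum_i \sum_(j | (enum_rank i < enum_rank j)%N) g i j = (\sum_i \sum_j g i j) / 2.
Proof.
move=> gC g0; set lt_sum := LHS.
have split_ij i j : g i j = (if (enum_rank i < enum_rank j)%N then g i j else 0)
                          + (if (enum_rank j < enum_rank i)%N then g j i else 0).
  case: (ltngtP (enum_rank i) (enum_rank j)) => [_|_|/val_inj/enum_rank_inj->].
  - by rewrite addr0.
  - by rewrite add0r gC.
  - by rewrite g0 addr0.
under eq_bigr do under eq_bigr do rewrite split_ij.
under eq_bigr do rewrite big_split /=.
rewrite big_split /= [X in _ + X]exchange_big /= -!(eq_bigr _ (fun i _ => big_mkcond _ _)).
by rewrite -/lt_sum; field.
Qed.

(* No normalisation of [y k] is needed: resistances only see differences of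
   potentials. *)
Lemma mult_deg_kirchhoff_green (y : W -> W -> R) : connected_graph F ->
  (forall k w, lap (y k) w = delta k w - (deg F w)%:R / vol) ->
  mult_deg_kirchhoff R F =
    \sum_k (deg F k)%:R * (vol * y k k - \sum_w y k w * (deg F w)%:R).
Proof.
move=> connF green.
have res i j : resistance R F i j = (y i i - y i j) + (y j j - y j i).
  rewrite (resistanceE (f := fun w => y i w - y j w) connF) => [|w]; first by ring.
  by rewrite lapB !green; ring.
pose a i j := (deg F i)%:R * (deg F j)%:R * (y i i - y i j).
rewrite /mult_deg_kirchhoff.
rewrite (eq_bigr (fun i => \sum_(j | (enum_rank i < enum_rank j)%N) (a i j + a j i)));
  last by move=> i _; apply: eq_bigr => j _; rewrite res /a; ring.
rewrite (sum_rank_lt (g := fun i j => a i j + a j i)) => [|i j|i]; last 2 first.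
- by rewrite addrC.
- by rewrite /a subrr !mulr0 addr0.
under eq_bigr do rewrite big_split /=.
rewrite big_split /= [X in _ + X]exchange_big /= -mulr2n -[_ *+ 2]mulr_natr mulfK ?pnatr_eq0 //.
apply: eq_bigr => i _; rewrite /vol mulr_suml -sumrB mulr_sumr.
by apply: eq_bigr => j _; rewrite /a; ring.
Qed.
End Laplacian.

Section Subdivision.
Variable R : realFieldType.
Variable V : finType.
Variable E : {set {set V}}.
Hypothesis simpleE : simple_graph E.

Local Notation Ev := {x : {set V} | x \in E}.
Local Notation SV := (sub_vertex E).
Local Notation S := (sub_edges E).
Local Notation d v := ((deg E v)%:R : R).

Lemma edgeE (e : Ev) v u : v \in val e -> u \in val e -> u != v ->
  val e = [set v; u].
Proof.
move=> ve ue uv; apply/eqP; rewrite eq_sym eqEcard subUset !sub1set ve ue /=.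
by rewrite cards2 (simpleE (valP e)) eq_sym uv.
Qed.

Lemma sum_incident_opposite v (g : V -> R) :
  \sum_(e : Ev | v \in val e) \sum_(u in val e | u != v) g u = \sum_(u | adj E v u) g u.
Proof.
rewrite (exchange_big_dep xpredT) //= [RHS]big_mkcond /=; apply: eq_bigr => u _.
case: (eqVneq u v) => [->|uv].
  by rewrite adj_irr big_pred0 // => e; rewrite !andbF.
rewrite /adj eq_sym uv /=; case: (boolP ([set v; u] \in E)) => vuE.
  rewrite (bigD1 (exist (fun x => x \in E) _ vuE)) /= ?inE ?eqxx ?orbT //.
  rewrite big1 ?addr0 // => e /andP[/andP[ve /andP[ue _]] ne].
  by case/eqP: ne; apply: val_inj; exact: edgeE.
rewrite big_pred0 // => e; apply/negP => /andP[ve /andP[ue _]].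
by move: (valP e); rewrite (edgeE ve ue uv) (negbTE vuE).
Qed.

Lemma sum_incident_const v (c : R) : \sum_(e : Ev | v \in val e) c = d v * c.
Proof.
rewrite degE -(sum_incident_opposite v (fun=> 1)) mulr_suml.
apply: eq_bigr => e ve.
have : \sum_(u in val e) (1 : R) = 2 by rewrite sumr_const (simpleE (valP e)).
rewrite (bigD1 v) //= => two.
have -> : \sum_(u in val e | u != v) (1 : R) = 1 by lra.
by rewrite mul1r.
Qed.

Lemma sum_edge_ends (g : V -> R) :
  \sum_(e : Ev) \sum_(a in val e) g a = \sum_a d a * g a.
Proof.
rewrite (exchange_big_dep xpredT) //=.
by apply: eq_bigr => a _; rewrite sum_incident_const.
Qed.

Lemma card_edges : #|{: Ev}| = #|E|.
Proof. by rewrite card_sig; apply: eq_card => x; rewrite !inE. Qed.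

Lemma vol_handshake : vol R E = 2 * #|E|%:R.
Proof.
rewrite /vol; under eq_bigr do rewrite -[_%:R]mulr1.
rewrite -sum_edge_ends.
under eq_bigr do rewrite sumr_const (simpleE (valP _)).
by rewrite sumr_const card_edges -mulr_natl mulr_natr.
Qed.

Lemma adjS_ll u v : adj S (inl u : SV) (inl v) = false.
Proof.
apply/negbTE; rewrite /adj inE negb_and; apply/orP; right.
apply/existsP => [[w /existsP[e /andP[_ /eqP uvE]]]].
have : (inr e : SV) \in [set inl u; inl v] by rewrite uvE !inE eqxx orbT.
by rewrite !inE.
Qed.

Lemma adjS_rr e f : adj S (inr e : SV) (inr f) = false.
Proof.
apply/negbTE; rewrite /adj inE negb_and; apply/orP; right.
apply/existsP => [[w /existsP[g /andP[_ /eqP efE]]]].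
have : (inl w : SV) \in [set inr e; inr f] by rewrite efE !inE eqxx.
by rewrite !inE.
Qed.

Lemma adjS_lr v e : adj S (inl v : SV) (inr e) = (v \in val e).
Proof.
rewrite /adj /= inE; apply/existsP/idP => [[w /existsP[f /andP[wf /eqP veE]]]|ve].
  have : (inl v : SV) \in [set inl w; inr f] by rewrite -veE !inE eqxx.
  rewrite !inE orbF => /eqP[->].
  have : (inr e : SV) \in [set inl w; inr f] by rewrite -veE !inE eqxx orbT.
  by rewrite !inE => /eqP[->].
by exists v; apply/existsP; exists e; rewrite ve eqxx.
Qed.

Lemma adjS_rl e v : adj S (inr e : SV) (inl v) = (v \in val e).
Proof. by rewrite adjC adjS_lr. Qed.

Lemma sum_adjS_l v (f : SV -> R) :
  \sum_(s | adj S (inl v) s) f s = \sum_(e : Ev | v \in val e) f (inr e).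
Proof.
rewrite big_sumType /= big_pred0 ?add0r => [|u]; last by rewrite adjS_ll.
by apply: eq_bigl => e; rewrite adjS_lr.
Qed.

Lemma sum_adjS_r e (f : SV -> R) :
  \sum_(s | adj S (inr e) s) f s = \sum_(a in val e) f (inl a).
Proof.
rewrite big_sumType /= [X in _ + X]big_pred0 ?addr0 => [|f']; last by rewrite adjS_rr.
by apply: eq_bigl => a; rewrite adjS_rl.
Qed.

Lemma degS_l v : (deg S (inl v))%:R = d v.
Proof. by rewrite degE sum_adjS_l sum_incident_const mulr1. Qed.

Lemma degS_r e : (deg S (inr e))%:R = 2 :> R.
Proof. by rewrite degE sum_adjS_r sumr_const (simpleE (valP e)). Qed.

Lemma volS : vol R S = 2 * vol R E.
Proof.
rewrite /vol big_sumType /=; under eq_bigr do rewrite degS_l.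
under [X in _ + X]eq_bigr do rewrite degS_r.
by rewrite sumr_const card_edges -/(vol R E) vol_handshake -mulr_natr; ring.
Qed.

Lemma connectedS : connected_graph E -> connected_graph S.
Proof.
move=> connE.
have symS : connect_sym (adj S) by apply: sym_connect_sym => x y; exact: adjC.
have adj_old u v : adj E u v -> connect (adj S) (inl u) (inl v).
  move=> /andP[_ uvE]; apply: (@connect_trans _ _ (inr (exist (fun x => x \in E) _ uvE))).
    by apply: connect1; rewrite adjS_lr !inE eqxx.
  by apply: connect1; rewrite adjS_rl !inE eqxx orbT.
have connect_old u v : connect (adj S) (inl u) (inl v).
  case/connectP: (connE u v) => p + ->; elim: p u => [|w p IHp] u /=.
    by rewrite connect0.
  by case/andP => /adj_old uw /IHp; apply: connect_trans.
have to_old (s : SV) : exists a, connect (adj S) s (inl a).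
  case: s => [a|e]; first by exists a; rewrite connect0.
  have /card_gt0P[a ae] : (0 < #|val e|)%N by rewrite (simpleE (valP e)).
  by exists a; apply: connect1; rewrite adjS_rl.
move=> s t; have [a sa] := to_old s; have [b tb] := to_old t.
by apply: connect_trans sa _; apply: connect_trans (connect_old a b) _; rewrite symS.
Qed.

Lemma sum_degS (f : SV -> R) :
  \sum_t f t * (deg S t)%:R = \sum_v f (inl v) * d v + \sum_(e : Ev) f (inr e) * 2.
Proof.
by rewrite big_sumType; congr (_ + _); apply: eq_bigr => ? _; rewrite ?degS_l ?degS_r.
Qed.

Lemma lapS_l (f : SV -> R) v :
  lap S f (inl v) = d v * f (inl v) - \sum_(e : Ev | v \in val e) f (inr e).
Proof. by rewrite /lap degS_l sum_adjS_l. Qed.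

Lemma lapS_r (f : SV -> R) e :
  lap S f (inr e) = 2 * f (inr e) - \sum_(a in val e) f (inl a).
Proof. by rewrite /lap degS_r sum_adjS_r. Qed.

(* Twice the extension of phi that is linear along each subdivided edge. *)
Definition lift (phi : V -> R) (s : SV) : R :=
  match s with inl v => 2 * phi v | inr e => \sum_(a in val e) phi a end.

Definition mid_const (c : R) (s : SV) : R :=
  match s with inl _ => 0 | inr _ => c end.

Lemma sum_lift_degS phi :
  \sum_t lift phi t * (deg S t)%:R = 4 * \sum_v phi v * d v.
Proof.
rewrite sum_degS -mulr_suml sum_edge_ends mulr_suml mulr_sumr -big_split /=.
by apply: eq_bigr => v _; ring.
Qed.

Lemma sum_mid_const_degS c : \sum_t mid_const c t * (deg S t)%:R = vol R E * c.
Proof.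
rewrite sum_degS big1 ?add0r /= => [|v _]; last exact: mul0r.
by rewrite sumr_const card_edges vol_handshake -mulr_natl; ring.
Qed.

Lemma lap_lift_l phi v : lap S (lift phi) (inl v) = lap E phi v.
Proof.
rewrite lapS_l /lap /=.
under eq_bigr => e ve do rewrite (bigD1 v) //=.
by rewrite big_split /= sum_incident_const sum_incident_opposite; ring.
Qed.

Lemma lap_lift_r phi e : lap S (lift phi) (inr e) = 0.
Proof. by rewrite lapS_r /= -mulr_sumr subrr. Qed.

Lemma lap_mid_const_l c v : lap S (mid_const c) (inl v) = - (d v * c).
Proof. by rewrite lapS_l /= sum_incident_const mulr0 sub0r. Qed.

Lemma lap_mid_const_r c e : lap S (mid_const c) (inr e) = 2 * c.
Proof. by rewrite lapS_r /= big1 ?subr0. Qed.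

Lemma lap_delta_mid_l e v : lap S (delta R (inr e)) (inl v) = - (v \in val e)%:R.
Proof.
rewrite lapS_l /delta /= mulr0 sub0r; congr (- _).
under eq_bigr do rewrite (inj_eq inr_inj).
case: (boolP (v \in val e)) => ve; last first.
  by rewrite big1 // => f vf; case: eqP => // fe; rewrite -fe vf in ve.
by rewrite (bigD1 e) //= eqxx big1 ?addr0 // => f /andP[_ /negbTE->].
Qed.

Lemma lap_delta_mid_r e f : lap S (delta R (inr e)) (inr f) = 2 * (f == e)%:R.
Proof. by rewrite lapS_r /delta (inj_eq inr_inj) big1 ?subr0. Qed.

Section Green.
Hypothesis connE : connected_graph E.
Hypothesis V2 : (2 <= #|V|)%N.

Lemma edges_gt0 : (0 < #|E|)%N.
Proof.
have [u [v [_ _ uv]]] := card_gt1P V2.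
case/connectP: (connE u v) => [[|w p]] /= uvp vE; first by rewrite vE eqxx in uv.
by case/andP: uvp => /andP[_ uwE] _; apply/card_gt0P; exists [set u; w].
Qed.

Lemma vol_neq0 : vol R E != 0.
Proof. by rewrite vol_handshake mulf_neq0 ?pnatr_eq0 // -lt0n edges_gt0. Qed.

Definition green (k : V) : V -> R :=
  lap_solve E (fun w => delta R k w - d w / vol R E).

Lemma lap_green k w : lap E (green k) w = delta R k w - d w / vol R E.
Proof.
apply: lap_solveK => //; first exact: leq_trans V2.
by rewrite sumrB sum_delta -mulr_suml divff ?vol_neq0 ?subrr.
Qed.

Local Notation c := (- (2 * vol R E)^-1).

(* For a source at an old vertex, the doubled potential of G works on S(G) up
   to the constant c at midpoints, which accounts for the extra sinks there.
   For a source at the midpoint of e = {a, b}, half of the current flows to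
   each of a and b, and [delta (inr e) / 2] carries it along the two half-edges. *)
Definition greenS (s : SV) : SV -> R :=
  match s with
  | inl k => fun t => lift (green k) t + mid_const c t
  | inr e => fun t =>
      2^-1 * (\sum_(a in val e) lift (green a) t + delta R (inr e) t) + mid_const c t
  end.

Lemma lap_greenS s t : lap S (greenS s) t = delta R s t - (deg S t)%:R / vol R S.
Proof.
have vol0 := vol_neq0.
rewrite volS; case: s => [k|e]; case: t => [v|f] /=;
  rewrite lapD ?lapZ ?lapD ?lap_sum ?degS_l ?degS_r.
- by rewrite lap_lift_l lap_green lap_mid_const_l /delta (inj_eq inl_inj); field.
- by rewrite lap_lift_r lap_mid_const_r /delta /=; field.
- under eq_bigr do rewrite lap_lift_l lap_green.
  rewrite lap_delta_mid_l lap_mid_const_l sumrB sum_delta_in sumr_const.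
  by rewrite (simpleE (valP e)) /delta /=; field.
- rewrite big1 => [|a _]; last exact: lap_lift_r.
  by rewrite lap_delta_mid_r lap_mid_const_r /delta (inj_eq inr_inj); field.
Qed.

Definition flux (k : V) : R := \sum_w green k w * d w.

Lemma sum_greenS_l_degS k :
  \sum_t greenS (inl k) t * (deg S t)%:R = 4 * flux k + vol R E * c.
Proof.
under eq_bigr do rewrite /= mulrDl.
by rewrite big_split /= sum_lift_degS sum_mid_const_degS.
Qed.

Lemma sum_greenS_r_degS e :
  \sum_t greenS (inr e) t * (deg S t)%:R =
    2 * \sum_(a in val e) flux a + 1 + vol R E * c.
Proof.
rewrite (eq_bigr (fun t => 2^-1 * (\sum_(a in val e) lift (green a) t * (deg S t)%:R
            + delta R (inr e) t * (deg S t)%:R) + mid_const c t * (deg S t)%:R));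
  last by move=> t _; rewrite /= -mulr_suml; ring.
rewrite big_split /= -mulr_sumr big_split /= exchange_big /= sum_mid_const_degS.
under eq_bigr do rewrite sum_lift_degS -/(flux _).
by rewrite sum_delta_mul degS_r -mulr_sumr; field; exact: vol_neq0.
Qed.

Lemma sum_edge_green :
  \sum_(e : Ev) \sum_(a in val e) \sum_(b in val e) green a b =
    2 * \sum_k d k * green k k - #|V|%:R + 1.
Proof.
have vol0 := vol_neq0.
rewrite (exchange_big_dep xpredT) //=.
transitivity (\sum_a (2 * (d a * green a a) - (1 - d a / vol R E))).
  apply: eq_bigr => a _.
  under eq_bigr => e ae do rewrite (bigD1 a) //=.
  rewrite big_split /= sum_incident_const sum_incident_opposite.
  by have := lap_green a a; rewrite /lap /delta eqxx /=; lra.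
rewrite sumrB -mulr_sumr sumrB sumr_const -mulr_suml -/(vol R E) divff //.
by rewrite -[#|xpredT|]/#|V|; lra.
Qed.

Lemma mult_deg_kirchhoffE :
  mult_deg_kirchhoff R E = vol R E * \sum_k d k * green k k - \sum_k d k * flux k.
Proof.
rewrite (mult_deg_kirchhoff_green connE lap_green) mulr_sumr -sumrB.
by apply: eq_bigr => k _; rewrite /flux; ring.
Qed.

Lemma mult_deg_kirchhoff_subdivision :
  mult_deg_kirchhoff R S =
    8 * mult_deg_kirchhoff R E + vol R E * (vol R E - 2 * #|V|%:R + 1).
Proof.
have vol0 := vol_neq0.
pose diag (e : Ev) := \sum_(a in val e) \sum_(b in val e) green a b.
rewrite (mult_deg_kirchhoff_green (connectedS connE) lap_greenS) big_sumType /= volS.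
rewrite (eq_bigr (fun v => 4 * vol R E * (d v * green v v) - 4 * (d v * flux v)
                           - vol R E * c * d v)); last first.
  by move=> v _; rewrite degS_l sum_greenS_l_degS /=; ring.
rewrite [X in _ + X](eq_bigr (fun e => 2 * vol R E * diag e
                         - 4 * \sum_(a in val e) flux a + 2 * (vol R E * (1 + c) - 1))); last first.
  by move=> e _; rewrite degS_r sum_greenS_r_degS /= -/(diag e) /delta eqxx /=; field.
rewrite !sumrB big_split /= sumrB -!mulr_sumr -/(vol R E) sumr_const card_edges.
rewrite sum_edge_ends sum_edge_green mult_deg_kirchhoffE -[_ *+ #|E|]mulr_natr.
have -> : #|E|%:R = vol R E / 2 :> R by rewrite vol_handshake; field.
by field.
Qed.

End Green.
End Subdivision.

Theorem theorem2p5 (R : realFieldType) (V : finType) (E : {set {set V}}) :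
  simple_graph E -> connected_graph E -> (2 <= #|V|)%N ->
  mult_deg_kirchhoff R (sub_edges E) =
    8 * mult_deg_kirchhoff R E
    + 2 * (#|E|)%:R * (2 * (#|E|)%:R - 2 * (#|V|)%:R + 1).
Proof.
move=> simpleE connE V2.
by rewrite mult_deg_kirchhoff_subdivision // vol_handshake.
Qed.
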